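(* Let $P=2$ and let $X=WH$ with $W=(w_{mp})\in\mathbb{H}_{\mathcal S}^{M\times 2}$ and $H=(h_{pn})\in\mathbb{R}_+^{2\times N}$. Suppose: (C1) there exist $m_1,m_2\in\{1,\dots,M\}$ (not necessarily distinct) such that $I_{m_1 1},I_{m_1 2},I_{m_2 1},I_{m_2 2}>0$ and $$\Phi_{m_1 1}=1,\quad \Phi_{m_1 2}\boldsymbol\mu_{m_1 2}\neq\boldsymbol\mu_{m_1 1},\quad I_{m_1 1}\ge \frac12\,\frac{1-\Phi_{m_1 2}^2}{1-\Phi_{m_1 2}\langle\boldsymbol\mu_{m_1 1},\boldsymbol\mu_{m_1 2}\rangle}\,I_{m_1 2},$$ $$\Phi_{m_2 2}=1,\quad \Phi_{m_2 1}\boldsymbol\mu_{m_2 1}\neq\boldsymbol\mu_{m_2 2},\quad I_{m_2 2}\ge \frac12\,\frac{1-\Phi_{m_2 1}^2}{1-\Phi_{m_2 1}\langle\boldsymbol\mu_{m_2 2},\boldsymbol\mu_{m_2 1}\rangle}\,I_{m_2 1};$$ (C2) there exist $n_1\neq n_2$ in $\{1,\dots,N\}$ with $h_{1n_1}>0$, $h_{2n_1}=0$, $h_{2n_2}>0$, $h_{1n_2}=0$. Then the QNMF $X=WH$ is essentially unique.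
   Context: $\mathbb{H}$ denotes the quaternions; for $q=a+b\mathbf i+c\mathbf j+d\mathbf k$, $\mathrm{Re}\,q=a$, $\mathrm{Im}\,q=b\mathbf i+c\mathbf j+d\mathbf k$, $|\mathrm{Im}\,q|^2=b^2+c^2+d^2$. $\mathbb{H}_{\mathcal S}=\{q\in\mathbb{H}: \mathrm{Re}\,q\ge 0,\ |\mathrm{Im}\,q|^2\le(\mathrm{Re}\,q)^2\}$; $\mathbb{R}_+=[0,\infty)$. Polar parametrization: every $w\in\mathbb{H}_{\mathcal S}$ with $\mathrm{Re}\,w>0$ is written $w=I+I\Phi\boldsymbol\mu$ with intensity $I=\mathrm{Re}\,w>0$, degree of polarization $\Phi=|\mathrm{Im}\,w|/\mathrm{Re}\,w\in[0,1]$, and polarization axis $\boldsymbol\mu$ a pure unit quaternion ($\mathrm{Re}\,\boldsymbol\mu=0$, $|\boldsymbol\mu|=1$), with $\boldsymbol\mu=\mathrm{Im}\,w/|\mathrm{Im}\,w|$ when $\mathrm{Im}\,w\ne0$ (arbitrary otherwise). For the entries of $W$ we write $w_{mp}=I_{mp}+I_{mp}\Phi_{mp}\boldsymbol\mu_{mp}$. For pure quaternions, $\langle\boldsymbol\mu_1,\boldsymbol\mu_2\rangle=-\mathrm{Re}(\boldsymbol\mu_1\boldsymbol\mu_2)$, the Euclidean inner product in $\mathbb{R}^3$. The QNMF $X=WH$ is essentially unique if for every $\tilde W\in\mathbb{H}_{\mathcal S}^{M\times P}$, $\tilde H\in\mathbb{R}_+^{P\times N}$ with $X=\tilde W\tilde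 H$ there exist a diagonal matrix $D$ with strictly positive diagonal entries and a permutation matrix $\Pi$ such that $\tilde W=WD\Pi$ and $\tilde H=(D\Pi)^{-1}H$. *)

From Stdlib Require Import Reals Lra.
Open Scope R_scope.

Record quat := mkQ { qre : R; qi : R; qj : R; qk : R }.

Definition qadd (p q : quat) : quat :=
  mkQ (qre p + qre q) (qi p + qi q) (qj p + qj q) (qk p + qk q).
Definition qscale (r : R) (q : quat) : quat :=
  mkQ (r * qre q) (r * qi q) (r * qj q) (r * qk q).
Definition qzero : quat := mkQ 0 0 0 0.

Definition Re (q : quat) : R := qre q.
Definition Im (q : quat) : quat := mkQ 0 (qi q) (qj q) (qk q).
Definition ImNorm2 (q : quat) : R := qi q ^ 2 + qj q ^ 2 + qk q ^ 2.
Definition ImNorm (q : quat) : R := sqrt (ImNorm2 q).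

Definition in_HS (q : quat) : Prop := 0 <= Re q /\ ImNorm2 q <= Re q ^ 2.

Definition pure_unit (mu : quat) : Prop :=
  qre mu = 0 /\ qi mu ^ 2 + qj mu ^ 2 + qk mu ^ 2 = 1.

(* <mu1, mu2> = - Re (mu1 mu2) for pure quaternions: Euclidean inner product *)
Definition inner (mu1 mu2 : quat) : R :=
  qi mu1 * qi mu2 + qj mu1 * qj mu2 + qk mu1 * qk mu2.

Definition Intens (w : quat) : R := Re w.
Definition Phi (w : quat) : R := ImNorm w / Re w.

(* mu is a valid polarization axis for w (Re w > 0):
   a pure unit quaternion with w = I + I Phi mu, i.e. Im w = I Phi mu
   (hence mu = Im w/|Im w| when Im w <> 0, arbitrary otherwise). *)
Definition polar_axis (w mu : quat) : Prop :=
  pure_unit mu /\ Im w = qscale (Intens w * Phi w) mu.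

(* Matrices are functions of 0-based indices; only entries with indices
   below the dimensions are meaningful. *)
Fixpoint qmatmul (P : nat) (W : nat -> nat -> quat) (H : nat -> nat -> R)
  (m n : nat) : quat :=
  match P with
  | O => qzero
  | S P' => qadd (qmatmul P' W H m n) (qscale (H P' n) (W m P'))
  end.

Definition W_in_HS (M P : nat) (W : nat -> nat -> quat) : Prop :=
  forall m p, (m < M)%nat -> (p < P)%nat -> in_HS (W m p).

Definition H_nonneg (P N : nat) (H : nat -> nat -> R) : Prop :=
  forall p n, (p < P)%nat -> (n < N)%nat -> 0 <= H p n.

Definition is_perm (P : nat) (sigma : nat -> nat) : Prop :=
  (forall p, (p < P)%nat -> (sigma p < P)%nat) /\
  (forall p q, (p < P)%nat -> (q < P)%nat -> sigma p = sigma q -> p = q).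

(* With D = diag(d) (d_p > 0) and
   the permutation matrix Pi with Pi_{pq} = [p = sigma q]:
     (W D Pi)_{mq} = d_{sigma q} w_{m, sigma q},
     ((D Pi)^{-1} H)_{qn} = h_{sigma q, n} / d_{sigma q}. *)
Definition essentially_unique (M P N : nat) (W : nat -> nat -> quat)
  (H : nat -> nat -> R) : Prop :=
  forall (W' : nat -> nat -> quat) (H' : nat -> nat -> R),
    W_in_HS M P W' -> H_nonneg P N H' ->
    (forall m n, (m < M)%nat -> (n < N)%nat ->
       qmatmul P W H m n = qmatmul P W' H' m n) ->
    exists (d : nat -> R) (sigma : nat -> nat),
      (forall p, (p < P)%nat -> 0 < d p) /\ is_perm P sigma /\
      (forall m q, (m < M)%nat -> (q < P)%nat ->
         W' m q = qscale (d (sigma q)) (W m (sigma q))) /\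
      (forall q n, (q < P)%nat -> (n < N)%nat ->
         H' q n = H (sigma q) n / d (sigma q)).

From Stdlib Require Import Reals Lra Psatz Lia.
Open Scope R_scope.

(* Geometry of the cone H_S: for a pure unit axis mu, the linear functional
   ray_defect mu a = Re a - <Im a, mu> is nonnegative on H_S and vanishes exactly
   on the ray {t (1 + mu)}.  Hence a fully polarized quaternion spans an extreme
   ray of H_S: in any nonnegative decomposition h e = u a + v b inside H_S, every
   summand with a positive weight lies on the ray of e.  Moreover a fully
   polarized e and a g with a different polarization vector are linearly
   independent over R.

   For another factorization X = W' H', column n1 of X is a multiple of W(:,0).
   Extremality at row m1 (where W(m1,0) is fully polarized) together with the
   independence of W(m1,0), W(m1,1) forces one column of W' to be a positive
   multiple of W(:,0) (lemma column_match); symmetrically, using n2 and row m2,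
   one column of W' is a positive multiple of W(:,1).  These columns differ, so
   W' = W D Pi, and the independence at row m1 then determines H'. *)

Lemma quat_ext p q :
  qre p = qre q -> qi p = qi q -> qj p = qj q -> qk p = qk q -> p = q.
Proof. destruct p, q; simpl; intros; subst; reflexivity. Qed.

Definition ray_defect (mu a : quat) : R := Re a - inner a mu.
Definition on_ray (mu a : quat) : Prop := Im a = qscale (Re a) mu.

(* On H_S the defect is nonnegative: by Cauchy-Schwarz, <Im a, mu> <= |Im a| <= Re a. *)
Lemma ray_defect_nonneg mu a : pure_unit mu -> in_HS a -> 0 <= ray_defect mu a.
Proof.
  destruct mu as [m0 m1 m2 m3], a as [a0 a1 a2 a3].
  unfold pure_unit, in_HS, ray_defect, inner, Re, ImNorm2; cbn [qre qi qj qk].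
  intros [_ Hmu] [Ha0 Ha].
  assert (CS : (a1*m1 + a2*m2 + a3*m3)^2 <= (a1^2 + a2^2 + a3^2) * (m1^2 + m2^2 + m3^2)).
  { assert (Lagrange : (a1^2 + a2^2 + a3^2) * (m1^2 + m2^2 + m3^2) - (a1*m1 + a2*m2 + a3*m3)^2
      = (a1*m2 - a2*m1)^2 + (a1*m3 - a3*m1)^2 + (a2*m3 - a3*m2)^2) by ring.
    pose proof (pow2_ge_0 (a1*m2 - a2*m1)); pose proof (pow2_ge_0 (a1*m3 - a3*m1));
    pose proof (pow2_ge_0 (a2*m3 - a3*m2)); lra. }
  rewrite Hmu, Rmult_1_r in CS. nra.
Qed.

Lemma sum_sq_zero x y z : x^2 + y^2 + z^2 <= 0 -> x = 0 /\ y = 0 /\ z = 0.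
Proof. intro. repeat split; nra. Qed.

(* Equality case: zero defect on H_S forces Im a = Re a mu, since
   |Im a - Re a mu|^2 = |Im a|^2 - (Re a)^2 <= 0 when <Im a, mu> = Re a. *)
Lemma ray_defect_zero mu a :
  pure_unit mu -> in_HS a -> ray_defect mu a = 0 -> on_ray mu a.
Proof.
  destruct mu as [m0 m1 m2 m3], a as [a0 a1 a2 a3].
  unfold pure_unit, in_HS, ray_defect, on_ray, inner, Re, Im, ImNorm2, qscale; cbn [qre qi qj qk].
  intros [-> Hmu] [Ha0 Ha] Hd.
  assert (Dist : (a1 - a0*m1)^2 + (a2 - a0*m2)^2 + (a3 - a0*m3)^2
      = (a1^2 + a2^2 + a3^2) - 2*a0*(a1*m1 + a2*m2 + a3*m3) + a0^2*(m1^2 + m2^2 + m3^2)) by ring.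
  assert (Hs : a1*m1 + a2*m2 + a3*m3 = a0) by lra.
  rewrite Hs, Hmu in Dist.
  destruct (sum_sq_zero (a1 - a0*m1) (a2 - a0*m2) (a3 - a0*m3)) as (E1 & E2 & E3); [nra|].
  apply quat_ext; simpl; lra.
Qed.

Lemma ray_defect_combination mu x a y b :
  ray_defect mu (qadd (qscale x a) (qscale y b)) = x * ray_defect mu a + y * ray_defect mu b.
Proof. unfold ray_defect, inner, Re; simpl; ring. Qed.

Lemma ray_defect_scale mu h e : ray_defect mu (qscale h e) = h * ray_defect mu e.
Proof. unfold ray_defect, inner, Re; simpl; ring. Qed.

Lemma ray_defect_on_ray mu e : pure_unit mu -> on_ray mu e -> ray_defect mu e = 0.
Proof.
  destruct mu as [m0 m1 m2 m3], e as [e0 e1 e2 e3].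
  unfold pure_unit, on_ray, ray_defect, inner, Re, Im, qscale; cbn [qre qi qj qk].
  intros [_ Hmu] E; injection E as _ -> -> ->.
  transitivity (e0 * (1 - (m1^2 + m2^2 + m3^2))); [ring | rewrite Hmu; ring].
Qed.

Lemma on_ray_extreme mu e a b h u v :
  pure_unit mu -> on_ray mu e -> in_HS a -> in_HS b -> 0 <= u -> 0 <= v ->
  qscale h e = qadd (qscale u a) (qscale v b) ->
  (u = 0 \/ on_ray mu a) /\ (v = 0 \/ on_ray mu b).
Proof.
  intros Hmu He Ha Hb Hu Hv E.
  pose proof (ray_defect_nonneg mu a Hmu Ha) as Da.
  pose proof (ray_defect_nonneg mu b Hmu Hb) as Db.
  assert (Sum : u * ray_defect mu a + v * ray_defect mu b = 0).
  { rewrite <- ray_defect_combination, <- E, ray_defect_scale, ray_defect_on_ray by assumption.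
    ring. }
  assert (Pa : u * ray_defect mu a = 0) by nra.
  assert (Pb : v * ray_defect mu b = 0) by nra.
  split.
  - destruct (Rmult_integral _ _ Pa); [left | right; apply ray_defect_zero]; auto.
  - destruct (Rmult_integral _ _ Pb); [left | right; apply ray_defect_zero]; auto.
Qed.

Lemma on_ray_parallel mu a e :
  on_ray mu a -> on_ray mu e -> 0 < Re e -> a = qscale (Re a / Re e) e.
Proof.
  destruct a as [a0 a1 a2 a3], e as [e0 e1 e2 e3].
  unfold on_ray, Re, Im, qscale; cbn [qre qi qj qk].
  intros Ea Ee He0; injection Ea as _ -> -> ->; injection Ee as _ -> -> ->.
  apply quat_ext; simpl; field; lra.
Qed.

Definition indep2 (a b : quat) : Prop :=
  forall x y, qadd (qscale x a) (qscale y b) = qzero -> x = 0 /\ y = 0.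

Lemma indep2_coeff a b x y x' y' :
  indep2 a b -> qadd (qscale x a) (qscale y b) = qadd (qscale x' a) (qscale y' b) ->
  x = x' /\ y = y'.
Proof.
  intros Hab E.
  destruct (Hab (x - x') (y - y')) as [Hx Hy]; [|split; lra].
  apply quat_ext; simpl;
    [apply (f_equal qre) in E | apply (f_equal qi) in E | apply (f_equal qj) in E | apply (f_equal qk) in E];
    simpl in E; lra.
Qed.

Lemma indep2_not_parallel a b x y :
  indep2 a b -> qscale x a = qscale y b -> x = 0 /\ y = 0.
Proof.
  intros Hab E. destruct (Hab x (- y)) as [Hx Hy]; [|split; lra].
  apply quat_ext; simpl;
    [apply (f_equal qre) in E | apply (f_equal qi) in E | apply (f_equal qj) in E | apply (f_equal qk) in E];
    simpl in E; lra.
Qed.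

Lemma polarized_indep2 e g mu nu p :
  0 < Re e -> on_ray mu e -> qre mu = 0 ->
  0 < Re g -> Im g = qscale (Re g * p) nu -> qre nu = 0 -> qscale p nu <> mu ->
  indep2 e g.
Proof.
  destruct e as [e0 e1 e2 e3], g as [g0 g1 g2 g3], mu as [m0 m1 m2 m3], nu as [n0 n1 n2 n3].
  unfold on_ray, Re, Im, qscale; cbn [qre qi qj qk].
  intros He0 Ee Hm0 Hg0 Eg Hn0 Hne x y E.
  injection Ee as _ -> -> ->; injection Eg as _ -> -> ->.
  apply (f_equal (fun q => (qre q, qi q, qj q, qk q))) in E; simpl in E.
  injection E as E0 E1 E2 E3.
  assert (Hy : y * g0 = - (x * e0)) by lra.
  destruct (Req_dec x 0) as [Hx|Hx].
  - subst x. split; [reflexivity|]. nra.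
  - exfalso. apply Hne. subst m0 n0.
    assert (Hxe : x * e0 <> 0) by (apply Rmult_integral_contrapositive; split; lra).
    assert (Yi : forall c, y * (g0 * p * c) = - (x * e0) * (p * c)) by (intro; rewrite <- Hy; ring).
    rewrite Yi in E1, E2, E3.
    apply quat_ext; simpl; [ring | | | ]; apply (Rmult_eq_reg_l (x * e0)); auto; lra.
Qed.

Lemma qmatmul2 W H m n :
  qmatmul 2 W H m n = qadd (qscale (H 0%nat n) (W m 0%nat)) (qscale (H 1%nat n) (W m 1%nat)).
Proof. apply quat_ext; simpl; ring. Qed.

Lemma qmatmul2_col0 W H m n :
  H 1%nat n = 0 -> qmatmul 2 W H m n = qscale (H 0%nat n) (W m 0%nat).
Proof. intro Z. apply quat_ext; simpl; rewrite Z; ring. Qed.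

Lemma qmatmul2_col1 W H m n :
  H 0%nat n = 0 -> qmatmul 2 W H m n = qscale (H 1%nat n) (W m 1%nat).
Proof. intro Z. apply quat_ext; simpl; rewrite Z; ring. Qed.

Lemma qadd_scale0_l x a b : qadd (qscale 0 a) (qscale x b) = qscale x b.
Proof. apply quat_ext; simpl; ring. Qed.

Lemma qadd_scale0_r x a b : qadd (qscale x a) (qscale 0 b) = qscale x a.
Proof. apply quat_ext; simpl; ring. Qed.

Lemma qadd_comm a b : qadd a b = qadd b a.
Proof. apply quat_ext; simpl; ring. Qed.

Lemma qscale_assoc x y a : qscale x (qscale y a) = qscale (x * y) a.
Proof. apply quat_ext; simpl; ring. Qed.

Definition col_prop (M : nat) (a e : nat -> quat) : Prop :=
  exists c, 0 < c /\ forall m, (m < M)%nat -> a m = qscale c (e m).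

Lemma col_prop_single M a e h u :
  0 < h -> 0 < u -> (forall m, (m < M)%nat -> qscale h (e m) = qscale u (a m)) ->
  col_prop M a e.
Proof.
  intros Hh Hu E. exists (h / u). split; [apply Rdiv_lt_0_compat; assumption|].
  intros m Hm.
  transitivity (qscale (/ u) (qscale u (a m))); [apply quat_ext; simpl; field; lra|].
  rewrite <- (E m Hm), qscale_assoc. unfold Rdiv. f_equal. ring.
Qed.

Lemma col_prop_exclusive M r a e f :
  (r < M)%nat -> indep2 (e r) (f r) -> col_prop M a e -> col_prop M a f -> False.
Proof.
  intros Hr Hef [c [Hc Ea]] [c' [Hc' Fa]].
  destruct (indep2_not_parallel _ _ c c' Hef) as [Hc0 _]; [|lra].
  rewrite <- (Ea r Hr), <- (Fa r Hr). reflexivity.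
Qed.

(* Both weights positive would put a(r), b(r) on the
   ray of e(r), making f(r) parallel to e(r); both zero contradicts h Re e(r) > 0. *)
Lemma column_match M r (e f a b : nat -> quat) mu h k u0 u1 v0 v1 :
  (r < M)%nat -> pure_unit mu -> on_ray mu (e r) -> 0 < Re (e r) -> indep2 (e r) (f r) ->
  in_HS (a r) -> in_HS (b r) -> 0 < h -> k <> 0 -> 0 <= u0 -> 0 <= u1 ->
  (forall m, (m < M)%nat -> qscale h (e m) = qadd (qscale u0 (a m)) (qscale u1 (b m))) ->
  qscale k (f r) = qadd (qscale v0 (a r)) (qscale v1 (b r)) ->
  col_prop M a e \/ col_prop M b e.
Proof.
  intros Hr Hmu Her He0 Hef Ha Hb Hh Hk Hu0 Hu1 Ecol Fcol.
  destruct (on_ray_extreme mu (e r) (a r) (b r) h u0 u1) as [Ra Rb]; auto.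
  assert (not_both : ~ (0 < u0 /\ 0 < u1)).
  { intros [P0 P1].
    destruct Ra as [|Ra]; [lra|]. destruct Rb as [|Rb]; [lra|].
    rewrite (on_ray_parallel _ _ _ Ra Her He0), (on_ray_parallel _ _ _ Rb Her He0),
      !qscale_assoc in Fcol.
    set (c := v0 * (Re (a r) / Re (e r)) + v1 * (Re (b r) / Re (e r))).
    destruct (indep2_not_parallel (e r) (f r) c k Hef) as [_ Hk0]; [|contradiction].
    rewrite Fcol. apply quat_ext; unfold c; simpl; ring. }
  assert (not_none : ~ (u0 = 0 /\ u1 = 0)).
  { intros [-> ->]. pose proof (f_equal qre (Ecol r Hr)) as E0. simpl in E0.
    unfold Re in He0. nra. }
  destruct (Req_dec u0 0) as [Z0|Z0]; destruct (Req_dec u1 0) as [Z1|Z1].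
  - tauto.
  - right. apply (col_prop_single M b e h u1); [assumption | lra |].
    intros m Hm. rewrite Ecol by assumption. rewrite Z0. apply qadd_scale0_l.
  - left. apply (col_prop_single M a e h u0); [assumption | lra |].
    intros m Hm. rewrite Ecol by assumption. rewrite Z1. apply qadd_scale0_r.
  - exfalso. apply not_both. split; lra.
Qed.

Definition perm2 (swap : bool) (q : nat) : nat := if swap then (1 - q)%nat else q.

Lemma perm2_is_perm s : is_perm 2 (perm2 s).
Proof. destruct s; unfold perm2; split; intros; lia. Qed.

Lemma perm2_invol s q : (q < 2)%nat -> perm2 s (perm2 s q) = q.
Proof. destruct s; unfold perm2; lia. Qed.

(* Once every column q of W' is a positive multiple of column perm2 s q of W,
   the factorization is W' = W D Pi; comparing coefficients at a row where the
   columns of W are independent gives H' = (D Pi)^-1 H. *)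
Lemma matched_columns_unique M N W H W' H' r s :
  (r < M)%nat -> indep2 (W r 0%nat) (W r 1%nat) ->
  (forall m n, (m < M)%nat -> (n < N)%nat -> qmatmul 2 W H m n = qmatmul 2 W' H' m n) ->
  col_prop M (fun m => W' m 0%nat) (fun m => W m (perm2 s 0)) ->
  col_prop M (fun m => W' m 1%nat) (fun m => W m (perm2 s 1)) ->
  exists (d : nat -> R) (sigma : nat -> nat),
    (forall p, (p < 2)%nat -> 0 < d p) /\ is_perm 2 sigma /\
    (forall m q, (m < M)%nat -> (q < 2)%nat -> W' m q = qscale (d (sigma q)) (W m (sigma q))) /\
    (forall q n, (q < 2)%nat -> (n < N)%nat -> H' q n = H (sigma q) n / d (sigma q)).
Proof.
  intros Hr Hind Heq [c0 [Hc0 E0]] [c1 [Hc1 E1]].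
  set (c := fun q => match q with O => c0 | _ => c1 end).
  exists (fun p => c (perm2 s p)), (perm2 s).
  split; [|split; [apply perm2_is_perm | split]].
  - intros p _. destruct (perm2 s p); simpl; assumption.
  - intros m q Hm Hq. rewrite perm2_invol by exact Hq.
    destruct q as [|[|q]]; [apply E0 | apply E1 | lia]; exact Hm.
  - intros q n Hq Hn. rewrite perm2_invol by exact Hq.
    pose proof (Heq r n Hr Hn) as E.
    rewrite !qmatmul2, (E0 r Hr), (E1 r Hr), !qscale_assoc in E.
    (* in the swapped case the two columns of W appear in reverse order *)
    destruct s; simpl in E; [rewrite (qadd_comm (qscale _ (W r 1%nat))) in E|];
      destruct (indep2_coeff _ _ _ _ _ _ Hind E) as [A B];
      destruct q as [|[|q]]; try lia; simpl; [rewrite B | rewrite A | rewrite A | rewrite B];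
      field; lra.
Qed.

Lemma fully_polarized_pair e g mu nu :
  0 < Intens e -> 0 < Intens g -> polar_axis e mu -> polar_axis g nu ->
  Phi e = 1 -> qscale (Phi g) nu <> mu ->
  pure_unit mu /\ on_ray mu e /\ indep2 e g.
Proof.
  intros He Hg [Hmu Ie] [Hnu Ig] Full Hne.
  assert (Re : on_ray mu e) by (unfold on_ray; rewrite Ie, Full, Rmult_1_r; reflexivity).
  split; [|split]; [assumption | assumption |].
  apply (polarized_indep2 e g mu nu (Phi g)); try assumption.
  - apply Hmu.
  - apply Hnu.
Qed.

Theorem proposition3 (M N : nat) (W : nat -> nat -> quat) (H : nat -> nat -> R)
  (mu : nat -> nat -> quat)
  (HW : W_in_HS M 2 W) (HH : H_nonneg 2 N H)
  (Hmu : forall m p, (m < M)%nat -> (p < 2)%nat -> 0 < Intens (W m p) ->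
           polar_axis (W m p) (mu m p))
  (m1 m2 : nat) (Hm1 : (m1 < M)%nat) (Hm2 : (m2 < M)%nat)
  (Hpos : 0 < Intens (W m1 0%nat) /\ 0 < Intens (W m1 1%nat) /\
          0 < Intens (W m2 0%nat) /\ 0 < Intens (W m2 1%nat))
  (C1a : Phi (W m1 0%nat) = 1 /\
         qscale (Phi (W m1 1%nat)) (mu m1 1%nat) <> mu m1 0%nat /\
         Intens (W m1 0%nat) >= 1 / 2 * ((1 - Phi (W m1 1%nat) ^ 2) /
            (1 - Phi (W m1 1%nat) * inner (mu m1 0%nat) (mu m1 1%nat))) * Intens (W m1 1%nat))
  (C1b : Phi (W m2 1%nat) = 1 /\
         qscale (Phi (W m2 0%nat)) (mu m2 0%nat) <> mu m2 1%nat /\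
         Intens (W m2 1%nat) >= 1 / 2 * ((1 - Phi (W m2 0%nat) ^ 2) /
            (1 - Phi (W m2 0%nat) * inner (mu m2 1%nat) (mu m2 0%nat))) * Intens (W m2 0%nat))
  (n1 n2 : nat) (Hn1 : (n1 < N)%nat) (Hn2 : (n2 < N)%nat) (Hn12 : n1 <> n2)
  (C2 : 0 < H 0%nat n1 /\ H 1%nat n1 = 0 /\ 0 < H 1%nat n2 /\ H 0%nat n2 = 0) :
  essentially_unique M 2 N W H.
Proof.
  intros W' H' HW' HH' Heq.
  destruct Hpos as (P10 & P11 & P20 & P21).
  destruct C1a as (Full1 & Dist1 & _), C1b as (Full2 & Dist2 & _).
  destruct C2 as (h1_pos & h1_zero & h2_pos & h2_zero).
  destruct (fully_polarized_pair (W m1 0%nat) (W m1 1%nat) (mu m1 0%nat) (mu m1 1%nat))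
    as (Pure1 & Ray1 & Ind1); auto.
  destruct (fully_polarized_pair (W m2 1%nat) (W m2 0%nat) (mu m2 1%nat) (mu m2 0%nat))
    as (Pure2 & Ray2 & Ind2); auto.
  assert (Col1 : forall m, (m < M)%nat -> qscale (H 0%nat n1) (W m 0%nat) =
            qadd (qscale (H' 0%nat n1) (W' m 0%nat)) (qscale (H' 1%nat n1) (W' m 1%nat))).
  { intros m Hm. rewrite <- qmatmul2_col0, (Heq m n1 Hm Hn1) by exact h1_zero. apply qmatmul2. }
  assert (Col2 : forall m, (m < M)%nat -> qscale (H 1%nat n2) (W m 1%nat) =
            qadd (qscale (H' 0%nat n2) (W' m 0%nat)) (qscale (H' 1%nat n2) (W' m 1%nat))).
  { intros m Hm. rewrite <- qmatmul2_col1, (Heq m n2 Hm Hn2) by exact h2_zero. apply qmatmul2. }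
  assert (two0 : (0 < 2)%nat) by lia. assert (two1 : (1 < 2)%nat) by lia.
  destruct (column_match M m1 (fun m => W m 0%nat) (fun m => W m 1%nat)
              (fun m => W' m 0%nat) (fun m => W' m 1%nat) (mu m1 0%nat) _ _ _ _ _ _
              Hm1 Pure1 Ray1 P10 Ind1 (HW' _ _ Hm1 two0) (HW' _ _ Hm1 two1)
              h1_pos (Rgt_not_eq _ _ h2_pos) (HH' _ _ two0 Hn1) (HH' _ _ two1 Hn1)
              Col1 (Col2 m1 Hm1)) as [A|A];
  destruct (column_match M m2 (fun m => W m 1%nat) (fun m => W m 0%nat)
              (fun m => W' m 0%nat) (fun m => W' m 1%nat) (mu m2 1%nat) _ _ _ _ _ _
              Hm2 Pure2 Ray2 P21 Ind2 (HW' _ _ Hm2 two0) (HW' _ _ Hm2 two1)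
              h2_pos (Rgt_not_eq _ _ h1_pos) (HH' _ _ two0 Hn2) (HH' _ _ two1 Hn2)
              Col2 (Col1 m2 Hm2)) as [B|B].
  - exfalso. exact (col_prop_exclusive M m1 _ _ _ Hm1 Ind1 A B).
  - exact (matched_columns_unique M N W H W' H' m1 false Hm1 Ind1 Heq A B).
  - exact (matched_columns_unique M N W H W' H' m1 true Hm1 Ind1 Heq B A).
  - exfalso. exact (col_prop_exclusive M m1 _ _ _ Hm1 Ind1 A B).
Qed.
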